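(* Let $\mathcal{X}$ be a family of subsets of $[d]$. Consider any two runs of the refinement procedure starting from $\mathrm{val}^1_{\mathcal{X}}=\mathrm{val}_{\mathcal{X}}$ (possibly making different choices of subsets at each step) which both reach a stationary function, i.e. some $\mathrm{val}^{n}$ with $\mathrm{val}^{n+1}=\mathrm{val}^{n}$. Then the two stationary functions coincide; in other words, $v_{\mathcal{X}}$ does not depend on the choices made.
   Context: A proper $\mathcal{X}$-sequence is a sequence $\mathcal{S}=(X_1,\dots,X_k)$ ($k\ge0$) of members of $\mathcal{X}$ with $X_i\not\subseteq\bigcup_{j<i}X_j$ for $i=2,\dots,k$. For $F\subseteq[d]$, $\mathrm{val}(F,\mathcal{S})=|F\cup\bigcup_{i=1}^kX_i|-k$ and $\mathrm{val}_{\mathcal{X}}(F)=\min_{\mathcal{S}}\mathrm{val}(F,\mathcal{S})$ over proper $\mathcal{X}$-sequences. Refinement procedure: given $\mathrm{val}^n:2^{[d]}\to\mathbb{Z}$, define $\mathrm{val}^{n+1}$ as follows. (i) If there are $A,B\subseteq[d]$ and $x\in\mathcal{X}$ with $A\cap B\subseteq x$ and $\mathrm{val}^n(A\cup B)>\mathrm{val}^n(A)+\mathrm{val}^n(B)-\min\{|A\cap B|,|x|-1\}$, choose one such and set $\mathrm{val}^{n+1}(A\cup B)$ equal to the right-hand side, leaving all other values unchanged. (ii) Otherwise, if there are $A\subsetneq B$ with $\mathrm{val}^n(A)>\mathrm{val}^n(B)$, choose one and set $\mathrm{val}^{n+1}(A)=\mathrm{val}^n(B)$, others unchanged. (iii)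 Otherwise, if there are $B\subsetneq A$ with $\mathrm{val}^n(A)>\mathrm{val}^n(B)+|A\setminus B|$, choose one and set $\mathrm{val}^{n+1}(A)=\mathrm{val}^n(B)+|A\setminus B|$, others unchanged. (iv) Otherwise $\mathrm{val}^{n+1}=\mathrm{val}^n$. When the sequence becomes stationary, the stationary function is denoted $v_{\mathcal{X}}$. *)

From HB Require Import structures.
From mathcomp Require Import all_boot all_order all_algebra.
Set Implicit Arguments. Unset Strict Implicit. Unset Printing Implicit Defensive.
Import Order.TTheory GRing.Theory Num.Theory.
Local Open Scope ring_scope.

(* Ground set [d] is modelled by 'I_d; subsets are {set 'I_d};
   the family X is a {set {set 'I_d}}; set functions are {ffun {set 'I_d} -> int}. *)

Definition setfun (d : nat) := {ffun {set 'I_d} -> int}.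

(* Proper X-sequence: members of X, and X_i not contained in the union of the
   previous ones for i = 2..k (0-based: 1 <= i < k). *)
Definition proper_seq (d : nat) (X : {set {set 'I_d}}) (S : seq {set 'I_d}) : Prop :=
  (forall Y, Y \in S -> Y \in X) /\
  (forall i : nat, (1 <= i < size S)%N ->
     ~~ (nth set0 S i \subset \bigcup_(j < i) nth set0 S j)).

Definition valS (d : nat) (F : {set 'I_d}) (S : seq {set 'I_d}) : int :=
  (#|F :|: \bigcup_(Y <- S) Y|%:Z - (size S)%:Z).

Definition is_valX (d : nat) (X : {set {set 'I_d}}) (v : setfun d) : Prop :=
  forall F : {set 'I_d},
    (exists S, proper_seq X S /\ valS F S = v F) /\
    (forall S, proper_seq X S -> v F <= valS F S).

Definition upd (d : nat) (v : setfun d) (C0 : {set 'I_d}) (z : int) : setfun d :=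
  [ffun C => if C == C0 then z else v C].

Definition rhs_i (d : nat) (v : setfun d) (A B x : {set 'I_d}) : int :=
  v A + v B - Num.min (#|A :&: B|%:Z) (#|x|%:Z - 1).

Definition cond_i (d : nat) (X : {set {set 'I_d}}) (v : setfun d) A B x : Prop :=
  x \in X /\ A :&: B \subset x /\ rhs_i v A B x < v (A :|: B).

Definition cond_ii (d : nat) (v : setfun d) (A B : {set 'I_d}) : Prop :=
  A \proper B /\ v B < v A.

Definition cond_iii (d : nat) (v : setfun d) (A B : {set 'I_d}) : Prop :=
  B \proper A /\ v B + (#|A :\: B|)%:Z < v A.

Definition refine_step (d : nat) (X : {set {set 'I_d}}) (v w : setfun d) : Prop :=
  (exists A B x, cond_i X v A B x /\ w = upd v (A :|: B) (rhs_i v A B x))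
  \/ ((forall A B x, ~ cond_i X v A B x) /\
      exists A B, cond_ii v A B /\ w = upd v A (v B))
  \/ ((forall A B x, ~ cond_i X v A B x) /\ (forall A B, ~ cond_ii v A B) /\
      exists A B, cond_iii v A B /\ w = upd v A (v B + (#|A :\: B|)%:Z))
  \/ ((forall A B x, ~ cond_i X v A B x) /\ (forall A B, ~ cond_ii v A B) /\
      (forall A B, ~ cond_iii v A B) /\ w = v).

(* A run of the procedure: r 0 plays the role of val^1 = val_X. *)
Definition refine_run (d : nat) (X : {set {set 'I_d}}) (r : nat -> setfun d) : Prop :=
  is_valX X (r 0%N) /\ forall n, refine_step X (r n) (r n.+1).

(* A stationary function g admits no refinement step, so each of the rules
   (i)-(iii) holds for g as an inequality.  These inequalities are monotone in
   the function they are compared with, hence a step applied to any v >= g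
   produces some w >= g.  Every run starts at val_X, which is determined by X,
   and only decreases; so the stationary function of one run lies below every
   member of the other run, in particular below its stationary function. *)

From mathcomp Require Import all_boot all_order all_algebra.
From mathcomp Require Import zify.
Import Order.TTheory GRing.Theory Num.Theory.
Local Open Scope ring_scope.
Set Implicit Arguments. Unset Strict Implicit.

Section Refinement.

Variables (d : nat) (X : {set {set 'I_d}}).

Definition refine_closed (g : setfun d) : Prop :=
  (forall A B x, ~ cond_i X g A B x) /\ (forall A B, ~ cond_ii g A B) /\
  (forall A B, ~ cond_iii g A B).

Lemma is_valX_le (v1 v2 : setfun d) :
  is_valX X v1 -> is_valX X v2 -> forall C, v1 C <= v2 C.
Proof.
move=> val1 val2 C; have [[S [properS <-]] _] := val2 C.
exact: (val1 C).2 S properS.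
Qed.

Lemma rhs_i_le (g v : setfun d) A B x :
  (forall C, g C <= v C) -> rhs_i g A B x <= rhs_i v A B x.
Proof.
move=> le_gv; rewrite /rhs_i; have := le_gv A; have := le_gv B.
set m := Num.min _ _; lia.
Qed.

Lemma refine_step_le (v w : setfun d) :
  refine_step X v w -> forall C, w C <= v C.
Proof.
move=> [[A [B [x [[_ [_ lt_w]] ->]]]]|
  [[_ [A [B [[_ lt_w] ->]]]]|[[_ [_ [A [B [[_ lt_w] ->]]]]]|[_ [_ [_ ->]]]]]] C;
  rewrite ?ffunE //; case: eqP => [->|_] //; exact: ltW.
Qed.

Lemma refine_step_fixed_closed (v : setfun d) :
  refine_step X v v -> refine_closed v.
Proof.
have upd_at (w : setfun d) C z : w = upd w C z -> z = w C.
  by move/(congr1 (fun f : setfun d => f C)); rewrite /= ffunE eqxx.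
move=> [[A [B [x [[_ [_ lt_v]] /upd_at eq_v]]]]|
  [[_ [A [B [[_ lt_v] /upd_at eq_v]]]]|
   [[_ [_ [A [B [[_ lt_v] /upd_at eq_v]]]]]|[noi [noii [noiii _]]]]]];
  last by [].
all: by rewrite eq_v ltxx in lt_v.
Qed.

Lemma refine_step_lower_bound (g v w : setfun d) :
  refine_closed g -> (forall C, g C <= v C) -> refine_step X v w ->
  forall C, g C <= w C.
Proof.
move=> [noi [noii noiii]] le_gv [[A [B [x [[xX [subAB _]] ->]]]]|
  [[_ [A [B [[ltAB _] ->]]]]|[[_ [_ [A [B [[ltBA _] ->]]]]]|[_ [_ [_ ->]]]]]] C;
  rewrite ?ffunE; try case: eqP => [->|_]; try exact: le_gv.
- have ge_rhs : g (A :|: B) <= rhs_i g A B x.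
    by rewrite leNgt; apply/negP => lt_g; apply: (noi A B x).
  exact: le_trans ge_rhs (rhs_i_le A B x le_gv).
- have le_gB : g A <= g B.
    by rewrite leNgt; apply/negP => lt_g; apply: (noii A B).
  exact: le_trans le_gB (le_gv B).
- have le_gB : g A <= g B + (#|A :\: B|)%:Z.
    by rewrite leNgt; apply/negP => lt_g; apply: (noiii A B).
  by apply: le_trans le_gB _; rewrite lerD2r.
Qed.

Variable r : nat -> setfun d.
Hypothesis run : refine_run X r.

Lemma refine_run_le0 n C : r n C <= r 0%N C.
Proof.
elim: n => [|n IH] //.
exact: le_trans (refine_step_le (run.2 n) C) IH.
Qed.

Lemma refine_run_lower_bound (g : setfun d) :
  refine_closed g -> (forall C, g C <= r 0%N C) -> forall n C, g C <= r n C.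
Proof.
move=> closed_g le_g0; elim=> [|n IH] //.
exact: refine_step_lower_bound closed_g IH (run.2 n).
Qed.

End Refinement.

Lemma refine_stationary_le (d : nat) (X : {set {set 'I_d}})
  (r1 r2 : nat -> setfun d) (n1 n2 : nat) :
  refine_run X r1 -> refine_run X r2 ->
  r1 n1.+1 = r1 n1 -> forall C, r1 n1 C <= r2 n2 C.
Proof.
move=> run1 run2 fixed1.
have closed1 : refine_closed X (r1 n1).
  by apply: refine_step_fixed_closed; rewrite -{2}fixed1; exact: run1.2.
apply: (refine_run_lower_bound run2 closed1) => C.
exact: le_trans (refine_run_le0 run1 n1 C) (is_valX_le run1.1 run2.1 C).
Qed.

Theorem mainTheorem16 (d : nat) (X : {set {set 'I_d}})
  (r1 r2 : nat -> setfun d) (n1 n2 : nat) :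
  refine_run X r1 -> refine_run X r2 ->
  r1 n1.+1 = r1 n1 -> r2 n2.+1 = r2 n2 ->
  r1 n1 = r2 n2.
Proof.
move=> run1 run2 fixed1 fixed2; apply/ffunP => C; apply/eqP; rewrite eq_le.
by rewrite (refine_stationary_le n2 run1 run2 fixed1)
           (refine_stationary_le n1 run2 run1 fixed2).
Qed.
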